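(* Let $(x_1,y_1),\dots,(x_n,y_n)$ be points in $\mathbb{R}^2$, let $z_i=x_i^2+y_i^2$, and for any expressions $u,v$ write $M_u=\sum_{i=1}^n u_i$ and $M_{uv}=\sum_{i=1}^n u_iv_i$ (e.g. $M_{xz}=\sum_i x_iz_i$, $M_{zz}=\sum_i z_i^2$, $M_x=\sum_i x_i$). Define the symmetric $4\times 4$ matrices $$ \mathbf{M}=\begin{pmatrix} M_{zz} & M_{xz} & M_{yz} & M_z\\ M_{xz} & M_{xx} & M_{xy} & M_x\\ M_{yz} & M_{xy} & M_{yy} & M_y\\ M_z & M_x & M_y & n \end{pmatrix},\qquad \mathbf{B}=\begin{pmatrix} 0&0&0&-2\\ 0&1&0&0\\ 0&0&1&0\\ -2&0&0&0 \end{pmatrix}, $$ and the quartic polynomial $Q_4(\eta)=\det(\mathbf{M}-\eta\mathbf{B})$. Let $\eta_\ast=\min\{\eta\ge 0:\ Q_4(\eta)=0\}$ be the first nonnegative root of $Q_4$. Then $Q_4$ is decreasing and concave up on the interval between $\eta=0$ and $\eta_\ast$. Consequently, Newton's method applied to the equation $Q_4(\eta)=0$ with starting point $\eta=0$ always converges to $\eta_\ast$.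
   Context: This arises in Pratt's algebraic circle fit: one minimizes $\sum_{i=1}^n (Az_i+Bx_i+Cy_i+D)^2=\mathbf{A}^T\mathbf{M}\mathbf{A}$ over $\mathbf{A}=(A,B,C,D)^T$ subject to $B^2+C^2-4AD=\mathbf{A}^T\mathbf{B}\mathbf{A}=1$, and the minimum value equals the smallest nonnegative generalized eigenvalue $\eta_\ast$ of the pair $(\mathbf{M},\mathbf{B})$. *)

From HB Require Import structures.
From mathcomp Require Import all_boot all_order all_algebra.
From mathcomp Require Import all_classical all_reals all_analysis.
Set Implicit Arguments. Unset Strict Implicit. Unset Printing Implicit Defensive.
Import Order.TTheory GRing.Theory Num.Theory.
Local Open Scope ring_scope.

Section Pratt.
Variables (R : realType) (n : nat) (x y : 'I_n -> R).

Definition zc (i : 'I_n) : R := x i ^+ 2 + y i ^+ 2.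

Definition feat (k : 'I_4) (i : 'I_n) : R :=
  match val k with 0 => zc i | 1 => x i | 2 => y i | _ => 1 end.

(* M_{uv} = \sum_i u_i v_i; entries of M (note M_{11 11} = \sum_i 1 = n) *)
Definition prattM : 'M[R]_4 :=
  \matrix_(k, l) \sum_(i < n) feat k i * feat l i.

Definition prattB : 'M[R]_4 :=
  \matrix_(k, l)
    match val k, val l with
    | 0, 3 => -2 | 3, 0 => -2
    | 1, 1 => 1 | 2, 2 => 1
    | _, _ => 0 end.

Definition Q4 : {poly R} :=
  \det (map_mx polyC prattM - 'X *: map_mx polyC prattB).

Fixpoint newton (k : nat) : R :=
  match k with
  | 0 => 0
  | k'.+1 => newton k' - Q4.[newton k'] / (Q4^`()).[newton k']
  end.

End Pratt.

(* Translating the data to its centroid is a unimodular change of basis, after which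
   Q4(η) = φ(η) D(η) − n W(η), where D(η) = det(S − η) for the centred scatter
   matrix S of (x, y), W(η) is the adjugate form of S − η evaluated at the centred
   cross moments of r = |(x, y) − centroid|² − mean, and φ(η) = n g − 4 tr(S) η − 4η²
   with g the centred second moment of r. The centred Gram matrix of (r, x, y) is
   positive semidefinite, so Q4(0) = det M ≥ 0 and Q4 > 0 on [0, η⋆); this forces η⋆
   below the smallest eigenvalue of S, where D > 0 and W ≥ 0, hence φ > 0 on [0, η⋆),
   which bounds c₂ ≥ 24 η⋆² in Q4(η) = c₀ + c₁η + c₂η² − 4η⁴ (no cubic term since
   M_z = M_xx + M_yy). So Q4'' = 2c₂ − 48η² ≥ 0 on [0, η⋆]: there Q4 lies above its
   tangent lines, hence is convex and, vanishing at η⋆, decreasing; the Newton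
   iterates from 0 then increase to η⋆, their steps being bounded below while they
   stay below any y < η⋆. *)

From HB Require Import structures.
From mathcomp Require Import all_boot all_order all_algebra.
From mathcomp Require Import all_classical all_reals all_analysis.
From mathcomp Require Import ring lra.
Set Implicit Arguments.
Unset Strict Implicit.
Unset Printing Implicit Defensive.
Import Order.TTheory GRing.Theory Num.Theory.
Import numFieldNormedType.Exports.
Local Open Scope classical_set_scope.
Local Open Scope ring_scope.

Lemma poly_horner_inj (R : numDomainType) (p q : {poly R}) :
  (forall e, p.[e] = q.[e]) -> p = q.
Proof.
move=> pq; apply/eqP; rewrite -subr_eq0; apply/eqP.
apply: (@roots_geq_poly_eq0 _ _ [seq i%:R | i <- iota 0 (size (p - q))]).
- by apply/allP => _ /mapP [i _ ->]; rewrite /root !hornerE pq subrr.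
- by rewrite map_inj_uniq ?iota_uniq // => i j /eqP; rewrite eqr_nat => /eqP.
- by rewrite size_map size_iota.
Qed.

Lemma quadratic_ge0_discr (R : rcfType) (a b c : R) :
  (forall s, 0 <= a * s ^+ 2 + b * s + c) -> b ^+ 2 <= 4 * a * c.
Proof.
move=> ge0; pose q := Poly [:: c; b; a].
have := @deg_le2_poly_ge0 _ q (size_Poly _).
rewrite !coef_Poly /= subr_le0; apply=> s.
by rewrite horner_Poly /= mul0r add0r; have := ge0 s; congr (0 <= _); ring.
Qed.

Lemma sqr_le_of_le_below (R : rcfType) (s K : R) : 0 <= s -> 0 <= K ->
  (forall e, 0 <= e -> e < s -> e ^+ 2 <= K) -> s ^+ 2 <= K.
Proof.
move=> s0 K0 below; rewrite leNgt; apply/negP => Ks.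
have t0 : 0 <= Num.sqrt K := sqrtr_ge0 K.
have tK : Num.sqrt K ^+ 2 = K by rewrite sqr_sqrtr.
move: (Num.sqrt K) t0 tK => t t0 tK; rewrite -tK in Ks below.
have ts : t < s by rewrite ltNge; apply/negP => st; move: Ks; rewrite !expr2; nra.
have := below ((t + s) / 2) _ _; rewrite !expr2; nra.
Qed.

Lemma adj2_form_ge0 (R : realFieldType) (al be ga u v : R) :
  0 <= al -> 0 <= ga -> be ^+ 2 <= al * ga ->
  0 <= ga * u ^+ 2 - 2 * be * u * v + al * v ^+ 2.
Proof.
move=> al0 ga0 det0; have [ga_gt0|ga_le0] := ltP 0 ga.
  rewrite -(pmulr_rge0 _ ga_gt0).
  have -> : ga * (ga * u ^+ 2 - 2 * be * u * v + al * v ^+ 2) =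
    (ga * u - be * v) ^+ 2 + (al * ga - be ^+ 2) * v ^+ 2 by ring.
  by rewrite addr_ge0 ?sqr_ge0 // mulr_ge0 ?sqr_ge0 // subr_ge0.
have ga_eq0 : ga = 0 by apply/le_anti; rewrite ga_le0 ga0.
have be_eq0 : be = 0.
  by apply/eqP; rewrite -sqrf_eq0 eq_le sqr_ge0 andbT; rewrite ga_eq0 mulr0 in det0.
rewrite ga_eq0 be_eq0; nra.
Qed.

Lemma det_mx44 (R : comPzRingType) (a : nat -> nat -> R) :
  \det (\matrix_(i < 4, j < 4) a i j) =
    a 0%N 0%N * (a 1%N 1%N * (a 2%N 2%N * a 3%N 3%N - a 2%N 3%N * a 3%N 2%N)
           - a 1%N 2%N * (a 2%N 1%N * a 3%N 3%N - a 2%N 3%N * a 3%N 1%N)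
           + a 1%N 3%N * (a 2%N 1%N * a 3%N 2%N - a 2%N 2%N * a 3%N 1%N))
  - a 0%N 1%N * (a 1%N 0%N * (a 2%N 2%N * a 3%N 3%N - a 2%N 3%N * a 3%N 2%N)
           - a 1%N 2%N * (a 2%N 0%N * a 3%N 3%N - a 2%N 3%N * a 3%N 0%N)
           + a 1%N 3%N * (a 2%N 0%N * a 3%N 2%N - a 2%N 2%N * a 3%N 0%N))
  + a 0%N 2%N * (a 1%N 0%N * (a 2%N 1%N * a 3%N 3%N - a 2%N 3%N * a 3%N 1%N)
           - a 1%N 1%N * (a 2%N 0%N * a 3%N 3%N - a 2%N 3%N * a 3%N 0%N)
           + a 1%N 3%N * (a 2%N 0%N * a 3%N 1%N - a 2%N 1%N * a 3%N 0%N))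
  - a 0%N 3%N * (a 1%N 0%N * (a 2%N 1%N * a 3%N 2%N - a 2%N 2%N * a 3%N 1%N)
           - a 1%N 1%N * (a 2%N 0%N * a 3%N 2%N - a 2%N 2%N * a 3%N 0%N)
           + a 1%N 2%N * (a 2%N 0%N * a 3%N 1%N - a 2%N 1%N * a 3%N 0%N)).
Proof.
have expand k (A : 'M[R]_k.+1) : \det A = \sum_j A ord0 j * cofactor A ord0 j.
  exact: expand_det_row.
do 3!rewrite !(expand, big_ord_recr, big_ord0) /cofactor.
rewrite !det_mx11 !mxE /= ?(addSn, add0n, addn0).
ring.
Qed.

Section SupportLines.
Variables (R : realType) (f df : R -> R) (s : R).
Hypothesis s_ge0 : 0 <= s.
Hypothesis f_s : f s = 0.
Hypothesis f_gt0 : forall {a}, 0 <= a -> a < s -> 0 < f a.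
Hypothesis f_support :
  forall {a b}, 0 <= a -> a <= s -> 0 <= b -> b <= s -> f a + df a * (b - a) <= f b.

Lemma support_deriv_lt0 {a} : 0 <= a -> a < s -> df a < 0.
Proof.
move=> a0 a_s; have := f_support a0 (ltW a_s) s_ge0 (lexx s); rewrite f_s.
by have := f_gt0 a0 a_s; nra.
Qed.

Lemma support_deriv_le {a b} : 0 <= a -> a <= b -> b <= s -> df a <= df b.
Proof.
move=> a0 ab b_s; have [-> //|a_ne_b] := eqVneq a b.
have a_lt_b : a < b by rewrite lt_neqAle a_ne_b.
have a_s := le_trans ab b_s; have b0 := le_trans a0 ab.
by have := f_support a0 a_s b0 b_s; have := f_support b0 b_s a0 a_s; nra.
Qed.

Lemma support_decreasing {a b} : 0 <= a -> a < b -> b <= s -> f b < f a.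
Proof.
move=> a0 ab b_s; have a_s := lt_le_trans ab b_s; have b0 := le_trans a0 (ltW ab).
have [b_lt_s|s_le_b] := ltP b s; last by rewrite (@le_anti _ _ b s) ?b_s // f_s f_gt0.
have := f_support b0 b_s a0 (ltW a_s).
by have := support_deriv_lt0 b0 b_lt_s; nra.
Qed.

Lemma support_convex a b t :
  0 <= a -> a <= s -> 0 <= b -> b <= s -> 0 <= t -> t <= 1 ->
  f (t * a + (1 - t) * b) <= t * f a + (1 - t) * f b.
Proof.
move=> a0 a_s b0 b_s t0 t1; set m := t * a + (1 - t) * b.
have m0 : 0 <= m by rewrite /m; nra.
have m_s : m <= s by rewrite /m; nra.
have t1' : 0 <= 1 - t by lra.
have := ler_wpM2l t0 (f_support m0 m_s a0 a_s).
have := ler_wpM2l t1' (f_support m0 m_s b0 b_s).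
have : df m * (t * (a - m) + (1 - t) * (b - m)) = 0 by rewrite /m; ring.
move: (df m) (f m) => d fm; lra.
Qed.

Lemma newton_step_in {u} : 0 <= u -> u <= s ->
  u <= u - f u / df u /\ u - f u / df u <= s.
Proof.
move=> u0 u_s; have [u_lt_s|s_le_u] := ltP u s; last first.
  by rewrite (@le_anti _ _ u s) ?u_s // f_s mul0r subr0.
have := f_support u0 u_s s_ge0 (lexx s); rewrite f_s.
have := f_gt0 u0 u_lt_s; have := support_deriv_lt0 u0 u_lt_s.
rewrite -mulrN -invrN; move: (df u) (f u) => d fu d0 fu0 tangent.
have nd0 : 0 < - d by rewrite oppr_gt0.
split; first by rewrite lerDl divr_ge0 // ltW.
by rewrite -lerBrDl ler_pdivrMr //; nra.
Qed.

Lemma newton_increment_ge {u y} : 0 <= u -> u <= y -> y < s ->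
  f y / - df 0 <= (u - f u / df u) - u.
Proof.
move=> u0 uy ys; have u_s := le_lt_trans uy ys; have y0 := le_trans u0 uy.
have dfu := support_deriv_lt0 u0 u_s.
have df0 := support_deriv_lt0 (lexx 0) (le_lt_trans u0 u_s).
have fyu : f y <= f u.
  have [u_lt_y|y_le_u] := ltP u y; first exact/ltW/(support_decreasing u0 u_lt_y (ltW ys)).
  by have -> : u = y by apply/le_anti; rewrite uy y_le_u.
have fu0 : 0 <= f u := ltW (f_gt0 u0 u_s).
rewrite addrAC subrr add0r -mulrN -invrN; apply: le_trans (_ : f u / - df 0 <= _).
  by rewrite ler_wpM2r // invr_ge0 oppr_ge0 ltW.
rewrite ler_wpM2l // lef_pV2 ?posrE ?oppr_gt0 // lerN2.
exact: support_deriv_le (lexx 0) u0 (ltW u_s).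
Qed.

Section Newton.
Variable xs : nat -> R.
Hypothesis xs0 : xs 0 = 0.
Hypothesis xsS : forall k, xs k.+1 = xs k - f (xs k) / df (xs k).

Lemma newton_in k : 0 <= xs k <= s.
Proof.
elim: k => [|k /andP [k0 k_s]]; first by rewrite xs0 lexx s_ge0.
have [kk1 k1s] := newton_step_in k0 k_s.
by rewrite xsS k1s (le_trans k0 kk1).
Qed.

Lemma newton_nondecreasing : nondecreasing_seq xs.
Proof.
apply/nondecreasing_seqP => k; have /andP [k0 k_s] := newton_in k.
by rewrite xsS; exact: (newton_step_in k0 k_s).1.
Qed.

Lemma newton_exceeds y : y < s -> exists k, y < xs k.
Proof.
move=> ys; have [y_lt0|y0] := ltP y 0; first by exists 0%N; rewrite xs0.
have s_gt0 := le_lt_trans y0 ys.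
pose kappa := f y / - df 0.
have kappa_gt0 : 0 < kappa.
  by rewrite divr_gt0 ?f_gt0 // oppr_gt0 support_deriv_lt0.
have growth k : y < xs k \/ k%:R * kappa <= xs k.
  elim: k => [|k [IH|IH]]; first by right; rewrite mul0r xs0.
    by left; apply: lt_le_trans IH (newton_nondecreasing (leqnSn k)).
  have /andP [k0 _] := newton_in k.
  have [y_lt_k|k_le_y] := ltP y (xs k).
    by left; apply: lt_le_trans y_lt_k (newton_nondecreasing (leqnSn k)).
  right; rewrite -natr1 mulrDl mul1r xsS.
  have := newton_increment_ge k0 k_le_y ys; rewrite -/kappa; lra.
pose K := Num.bound (s / kappa).
have [//|sK] := growth K; first by exists K.
have := archi_boundP (divr_ge0 s_ge0 (ltW kappa_gt0)).
rewrite -/K ltr_pdivrMr // => lt_sK.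
by have /andP [_ K_s] := newton_in K; lra.
Qed.

Lemma newton_cvg : xs @ \oo --> s.
Proof.
apply/cvgrPdist_lt => eps eps_gt0.
have [K sK] : exists K, s - eps < xs K by apply: newton_exceeds; lra.
exists K => // k /= Kk; have := newton_nondecreasing Kk.
have /andP [_ k_s] := newton_in k.
by rewrite ger0_norm ?subr_ge0 //; lra.
Qed.

End Newton.

End SupportLines.

Section Quartic.
Variables (R : comNzRingType) (c2 c1 c0 : R).

Definition quartic : {poly R} := c0%:P + c1 *: 'X + c2 *: 'X^2 - 4 *: 'X^4.

Lemma horner_quartic e : quartic.[e] = c0 + c1 * e + c2 * e ^+ 2 - 4 * e ^+ 4.
Proof. by rewrite /quartic !hornerE. Qed.

Lemma horner_deriv_quartic e : quartic^`().[e] = c1 + 2 * c2 * e - 16 * e ^+ 3.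
Proof.
rewrite /quartic !(derivD, derivN, derivZ, derivC, derivXn, derivX) !hornerE /=.
ring.
Qed.

End Quartic.

Lemma quartic_support (R : realFieldType) (c2 c1 c0 s : R) : 24 * s ^+ 2 <= c2 ->
  forall a b, 0 <= a -> a <= s -> 0 <= b -> b <= s ->
  (quartic c2 c1 c0).[a] + (quartic c2 c1 c0)^`().[a] * (b - a)
    <= (quartic c2 c1 c0).[b].
Proof.
move=> c2_ge a b a0 a_s b0 b_s; rewrite -subr_ge0 !horner_quartic horner_deriv_quartic.
have -> : c0 + c1 * b + c2 * b ^+ 2 - 4 * b ^+ 4 -
    (c0 + c1 * a + c2 * a ^+ 2 - 4 * a ^+ 4 + (c1 + 2 * c2 * a - 16 * a ^+ 3) * (b - a))
  = (b - a) ^+ 2 * (c2 - 4 * (b ^+ 2 + 2 * a * b + 3 * a ^+ 2)) by ring.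
rewrite mulr_ge0 ?sqr_ge0 // subr_ge0.
have : a * a <= s * s by apply: ler_pM.
have : a * b <= s * s by apply: ler_pM.
have : b * b <= s * s by apply: ler_pM.
move: c2_ge; rewrite !expr2; lra.
Qed.

Section CentredFactorisation.
Variables (R : rcfType) (N g w1 w2 p b r : R).

Definition form3 r1 r2 r3 := g * r1 ^+ 2 + 2 * w1 * r1 * r2 + 2 * w2 * r1 * r3
  + p * r2 ^+ 2 + 2 * b * r2 * r3 + r * r3 ^+ 2.

Definition det2 e := (p - e) * (r - e) - b ^+ 2.
Definition adj2 e := (r - e) * w1 ^+ 2 - 2 * b * w1 * w2 + (p - e) * w2 ^+ 2.
Definition phi e := N * g - 4 * (p + r) * e - 4 * e ^+ 2.

Definition coef2 := N * g + 4 * (p + r) ^+ 2 - 4 * (p * r - b ^+ 2).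
Definition coef1 := N * (w1 ^+ 2 + w2 ^+ 2) - (p + r) * (N * g + 4 * (p * r - b ^+ 2)).
Definition coef0 := N * (g * (p * r - b ^+ 2) - adj2 0).

Lemma phi_det2_adj2_quarticE e :
  phi e * det2 e - N * adj2 e = (quartic coef2 coef1 coef0).[e].
Proof. by rewrite horner_quartic /coef2 /coef1 /coef0 /phi /det2 /adj2; ring. Qed.

Hypothesis N_ge0 : 0 <= N.
Hypothesis form3_ge0 : forall r1 r2 r3, 0 <= form3 r1 r2 r3.

Lemma form3_diag_ge0 : [/\ 0 <= g, 0 <= p & 0 <= r].
Proof.
have := form3_ge0 1 0 0; have := form3_ge0 0 1 0; have := form3_ge0 0 0 1.
by rewrite /form3 !expr2; split; lra.
Qed.

Lemma form3_sqr_le : b ^+ 2 <= p * r.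
Proof.
have : (2 * b) ^+ 2 <= 4 * p * r.
  by apply: quadratic_ge0_discr => t; have := form3_ge0 0 t 1; rewrite /form3 !expr2; lra.
by rewrite !expr2; lra.
Qed.

Lemma adj2_0_le : adj2 0 <= g * (p * r - b ^+ 2).
Proof.
have [g0 _ _] := form3_diag_ge0; set d := p * r - b ^+ 2.
have d0 : 0 <= d by rewrite subr_ge0 form3_sqr_le.
(* Along the line t |-> (t, - adj [[p, b], [b, r]] (w1, w2)) the form is
   g t^2 - 2 (adj2 0) t + d (adj2 0). *)
have discr : (- 2 * adj2 0) ^+ 2 <= 4 * g * (d * adj2 0).
  apply: quadratic_ge0_discr => t.
  have := form3_ge0 t (- (r * w1 - b * w2)) (- (p * w2 - b * w1)).
  by rewrite /form3 /adj2 /d; congr (0 <= _); ring.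
have [W_le0|W_gt0] := leP (adj2 0) 0; first exact: le_trans W_le0 (mulr_ge0 g0 d0).
by rewrite -(ler_pM2l W_gt0); move: discr; rewrite !expr2; nra.
Qed.

Definition lambda_min := (p + r - Num.sqrt ((p - r) ^+ 2 + 4 * b ^+ 2)) / 2.
Definition lambda_max := (p + r + Num.sqrt ((p - r) ^+ 2 + 4 * b ^+ 2)) / 2.

Lemma det2E e : det2 e = (lambda_min - e) * (lambda_max - e).
Proof.
have disc0 : 0 <= (p - r) ^+ 2 + 4 * b ^+ 2.
  by rewrite addr_ge0 ?sqr_ge0 // mulr_ge0 ?sqr_ge0.
rewrite /det2 /lambda_min /lambda_max; have := sqr_sqrtr disc0.
move: (Num.sqrt _) => q q2.
have -> : (p - e) * (r - e) - b ^+ 2 = ((p + r - 2 * e) ^+ 2 - q ^+ 2) / 4.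
  by rewrite q2; field.
by field.
Qed.

Lemma lambda_min_bounds :
  [/\ 0 <= lambda_min, lambda_min <= p, lambda_min <= r & lambda_min <= lambda_max].
Proof.
have [_ p0 r0] := form3_diag_ge0; have bpr := form3_sqr_le.
have disc0 : 0 <= (p - r) ^+ 2 + 4 * b ^+ 2.
  by rewrite addr_ge0 ?sqr_ge0 // mulr_ge0 ?sqr_ge0.
have := sqrtr_ge0 ((p - r) ^+ 2 + 4 * b ^+ 2); have := sqr_sqrtr disc0.
rewrite /lambda_min /lambda_max => q2 q0.
move: (Num.sqrt _) q0 q2 => q q0 q2.
move: bpr; rewrite !expr2 in q2 * => bpr.
by split; rewrite ?ler_pdivlMr ?ler_pdivrMr ?ler_pM2r //; nra.
Qed.

Lemma adj2_ge0 e : e <= lambda_min -> 0 <= adj2 e.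
Proof.
move=> e_le; have [_ lp lr lmax] := lambda_min_bounds.
apply: adj2_form_ge0; rewrite ?subr_ge0 ?(le_trans e_le) //.
rewrite -subr_ge0 -/(det2 e) det2E mulr_ge0 // subr_ge0 //.
exact: le_trans lmax.
Qed.

Lemma coef2_ge0 : 0 <= coef2.
Proof.
have [g0 p0 r0] := form3_diag_ge0; have := mulr_ge0 N_ge0 g0.
by rewrite /coef2 !expr2; nra.
Qed.

Variables (P : {poly R}) (s : R).
Hypothesis P_factor : forall e, P.[e] = phi e * det2 e - N * adj2 e.
Hypothesis s_ge0 : 0 <= s.
Hypothesis s_min : forall e, 0 <= e -> P.[e] = 0 -> s <= e.

Lemma factored_ge0_at0 : 0 <= P.[0].
Proof.
have -> : P.[0] = N * (g * (p * r - b ^+ 2) - adj2 0) by rewrite P_factor /phi /det2; ring.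
by rewrite mulr_ge0 // subr_ge0 adj2_0_le.
Qed.

Lemma factored_gt0 {a} : 0 <= a -> a < s -> 0 < P.[a].
Proof.
move=> a0 a_s; have [P0_gt0|P0_le0] := ltP 0 P.[0]; last first.
  have /(s_min (lexx 0)) s_le0 : P.[0] = 0.
    by apply/le_anti; rewrite P0_le0 factored_ge0_at0.
  by have := lt_le_trans a_s s_le0; rewrite ltNge a0.
rewrite ltNge; apply/negP => Pa_le0.
have [e /andP [e0 ea]] : exists2 e, 0 <= e <= a & root (- P) e.
  by apply: poly_ivt => //; rewrite !hornerN oppr_le0 oppr_ge0 Pa_le0 ltW.
rewrite rootN => /rootP /(s_min e0) s_le_e.
by have := le_lt_trans s_le_e (le_lt_trans ea a_s); rewrite ltxx.
Qed.

Lemma root_le_lambda_min : s <= lambda_min.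
Proof.
have [l0 _ _ _] := lambda_min_bounds; rewrite leNgt; apply/negP => l_s.
have := factored_gt0 l0 l_s; rewrite P_factor det2E subrr mul0r mulr0 sub0r oppr_gt0.
by rewrite ltNge mulr_ge0 ?adj2_ge0.
Qed.

Lemma coef2_ge_below_root e : 0 <= e -> e < s -> e ^+ 2 <= coef2 / 24.
Proof.
move=> e0 e_s; have [l0 lp lr lmax] := lambda_min_bounds.
have e_l := lt_le_trans e_s root_le_lambda_min.
have det2_gt0 : 0 < det2 e by rewrite det2E mulr_gt0 // subr_gt0 // (lt_le_trans e_l).
have phi_gt0 : 0 < phi e.
  have := factored_gt0 e0 e_s; rewrite P_factor.
  have := mulr_ge0 N_ge0 (adj2_ge0 (ltW e_l)).
  by move=> NW Pe; rewrite -(pmulr_lgt0 _ det2_gt0); lra.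
have [_ p0 r0] := form3_diag_ge0.
have ep := le_trans (ltW e_l) lp; have er := le_trans (ltW e_l) lr.
rewrite ler_pdivlMr //; move: phi_gt0; rewrite /phi /coef2 !expr2.
have : e * e <= p * e by apply: ler_wpM2r.
have : e * e <= r * e by apply: ler_wpM2r.
have : e * e <= p * r by apply: ler_pM.
have : e * e <= p * p by apply: ler_pM.
have : e * e <= r * r by apply: ler_pM.
have : 0 <= b * b by rewrite -expr2 sqr_ge0.
lra.
Qed.

Lemma coef2_ge_root : 24 * s ^+ 2 <= coef2.
Proof.
rewrite mulrC -ler_pdivlMr //; apply: sqr_le_of_le_below => //.
  by rewrite divr_ge0 ?coef2_ge0.
exact: coef2_ge_below_root.
Qed.

End CentredFactorisation.

Section Moments.
Variables (R : realType) (n : nat) (x y : 'I_n -> R).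

Definition mom (k l : nat) : R := prattM x y (inord k) (inord l).

Lemma mom_sym k l : mom k l = mom l k.
Proof. by rewrite /mom !mxE; apply: eq_bigr => i _; rewrite mulrC. Qed.

Lemma mom03 : mom 0 3 = mom 1 1 + mom 2 2.
Proof.
rewrite /mom !mxE /feat /= !inordK //= -big_split /=.
by apply: eq_bigr => i _; rewrite /zc mulr1.
Qed.

Lemma mom33 : mom 3 3 = n%:R.
Proof.
rewrite /mom mxE /feat /= !inordK //= (eq_bigr _ (fun _ _ => mulr1 1)).
by rewrite sumr_const card_ord.
Qed.

Definition feat_comb (c : seq R) (i : 'I_n) : R := \sum_(k < 4) c`_k * feat x y k i.

Definition dot (u v : 'I_n -> R) : R := \sum_i u i * v i.

Lemma dot_feat_comb u v c d : u =1 feat_comb c -> v =1 feat_comb d ->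
  dot u v = \sum_(k < 4) \sum_(l < 4) c`_k * d`_l * mom k l.
Proof.
move=> uc vd; rewrite /dot (eq_bigr _ (fun i _ => congr2 *%R (uc i) (vd i))).
under [RHS]eq_bigr => k _ do under eq_bigr => l _ do rewrite /mom !inord_val mxE mulr_sumr.
under eq_bigr => i _ do rewrite /feat_comb big_distrlr /=.
rewrite exchange_big; apply: eq_bigr => k _; rewrite exchange_big.
by apply: eq_bigr => l _; apply: eq_bigr => i _; ring.
Qed.

Definition xbar := mom 1 3 / n%:R.
Definition ybar := mom 2 3 / n%:R.
Definition rbar := (mom 1 1 + mom 2 2) / n%:R - xbar ^+ 2 - ybar ^+ 2.

Definition xc i := x i - xbar.
Definition yc i := y i - ybar.
Definition rc i := xc i ^+ 2 + yc i ^+ 2 - rbar.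

Lemma xc_feat_comb : xc =1 feat_comb [:: 0; 1; 0; - xbar].
Proof. by move=> i; rewrite /feat_comb !big_ord_recr big_ord0 /= /feat /= /xc; ring. Qed.

Lemma yc_feat_comb : yc =1 feat_comb [:: 0; 0; 1; - ybar].
Proof. by move=> i; rewrite /feat_comb !big_ord_recr big_ord0 /= /feat /= /yc; ring. Qed.

Lemma rc_feat_comb :
  rc =1 feat_comb [:: 1; - 2 * xbar; - 2 * ybar; xbar ^+ 2 + ybar ^+ 2 - rbar].
Proof.
by move=> i; rewrite /feat_comb !big_ord_recr big_ord0 /= /feat /= /rc /xc /yc /zc; ring.
Qed.

Definition crr := dot rc rc.
Definition crx := dot rc xc.
Definition cry := dot rc yc.
Definition cxx := dot xc xc.
Definition cxy := dot xc yc.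
Definition cyy := dot yc yc.

Lemma form3_centred_ge0 r1 r2 r3 : 0 <= form3 crr crx cry cxx cxy cyy r1 r2 r3.
Proof.
rewrite /form3 /crr /crx /cry /cxx /cxy /cyy /dot !(mulr_suml, mulr_sumr) -!big_split /=.
apply: sumr_ge0 => i _.
by have := sqr_ge0 (r1 * rc i + r2 * xc i + r3 * yc i); congr (0 <= _); ring.
Qed.

Lemma horner_Q4 e : (Q4 x y).[e] = \det (prattM x y - e *: prattB R).
Proof.
rewrite /Q4 -horner_evalE -det_map_mx; congr (\det _); apply/matrixP => i j.
by rewrite !mxE /= horner_evalE !hornerE.
Qed.

(* In the centred coordinates (rc, xc, yc, 1) the pencil M - e B becomes
   [[crr - 4 rbar e, crx, cry, 2 e], [crx, cxx - e, cxy, 0], [cry, cxy, cyy - e, 0],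
   [2 e, 0, 0, n]]; eliminating its last row gives this factorisation. *)
Lemma Q4_factor e : (Q4 x y).[e] =
  phi n%:R crr cxx cyy e * det2 cxx cxy cyy e - n%:R * adj2 crx cry cxx cxy cyy e.
Proof.
rewrite horner_Q4.
have -> : prattM x y - e *: prattB R =
    \matrix_(k < 4, l < 4) (mom k l - e * prattB R (inord k) (inord l)).
  by apply/matrixP => k l; rewrite [in RHS]mxE /mom !inord_val !mxE.
rewrite (det_mx44 (fun k l => mom k l - e * prattB R (inord k) (inord l))).
rewrite !mxE /= !inordK //= /crr /crx /cry /cxx /cxy /cyy.
rewrite (dot_feat_comb rc_feat_comb rc_feat_comb) (dot_feat_comb rc_feat_comb xc_feat_comb).
rewrite (dot_feat_comb rc_feat_comb yc_feat_comb) (dot_feat_comb xc_feat_comb xc_feat_comb).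
rewrite (dot_feat_comb xc_feat_comb yc_feat_comb) (dot_feat_comb yc_feat_comb yc_feat_comb).
rewrite !big_ord_recr !big_ord0 /=.
rewrite (mom_sym 1 0) (mom_sym 2 0) (mom_sym 3 0) (mom_sym 2 1) (mom_sym 3 1) (mom_sym 3 2).
rewrite mom03 mom33 /phi /det2 /adj2 /rbar /xbar /ybar.
(* For n = 0 every moment vanishes, and with x / 0 = 0 so do the centred ones. *)
have [n0|n_gt0] := posnP n.
  have mom0 k l : mom k l = 0.
    by rewrite /mom mxE big1 // => -[i i_lt] _; exfalso; move: i_lt; rewrite n0.
  have N0 : n%:R = 0 :> R by rewrite n0.
  by rewrite !mom0 N0; ring.
by field; rewrite pnatr_eq0 -lt0n.
Qed.

End Moments.

Theorem theorem1 (R : realType) (n : nat) (x y : 'I_n -> R) (eta_star : R) :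
  0 <= eta_star ->
  (Q4 x y).[eta_star] = 0 ->
  (forall eta : R, 0 <= eta -> (Q4 x y).[eta] = 0 -> eta_star <= eta) ->
  [/\ (* Q4 is decreasing on [0, eta_star] *)
      (forall a b : R, 0 <= a -> a < b -> b <= eta_star ->
         (Q4 x y).[b] < (Q4 x y).[a]),
      (* Q4 is concave up (convex) on [0, eta_star] *)
      (forall a b t : R, 0 <= a -> a <= eta_star -> 0 <= b -> b <= eta_star ->
         0 <= t -> t <= 1 ->
         (Q4 x y).[t * a + (1 - t) * b] <=
           t * (Q4 x y).[a] + (1 - t) * (Q4 x y).[b])
    & (* Newton's method from 0 converges to eta_star *)
      (newton x y) @ \oo --> eta_star].
Proof.
move=> s_ge0 Q_s s_min.
have N_ge0 : 0 <= n%:R :> R := ler0n R n.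
have psd := form3_centred_ge0 x y.
have factor := Q4_factor x y.
have Q_gt0 := factored_gt0 N_ge0 psd factor s_min.
have Q4E := poly_horner_inj
  (fun e => etrans (factor e) (phi_det2_adj2_quarticE _ _ _ _ _ _ _ e)).
have support : forall a b, 0 <= a -> a <= eta_star -> 0 <= b -> b <= eta_star ->
    (Q4 x y).[a] + (Q4 x y)^`().[a] * (b - a) <= (Q4 x y).[b].
  rewrite Q4E; apply: quartic_support.
  exact: (coef2_ge_root N_ge0 psd factor s_ge0 s_min).
split; first exact: support_decreasing s_ge0 Q_s Q_gt0 support.
  exact: support_convex support.
exact: (newton_cvg (xs := newton x y) s_ge0 Q_s Q_gt0 support
  (erefl _) (fun k => erefl _)).
Qed.
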